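(* Let $\theta\in(0,1)$ be irrational, $k\ge1$ even, $\ell\ge1$, and $1\le i\le q_k$. (a) If $a_{k+j}=1$ for all $2\le j\le\ell$, then $$\#\{1\le j\le q_{k+\ell}: j\theta\in(i\theta-\|q_k\theta\|,\ i\theta+\tilde r_{k+1}\|q_k\theta\|+\|q_{k+1}\theta\|)\}\ge u_\ell\tilde r_{k+1}+u_{\ell+1}.$$ (b) If $a_{k+2}=2$ and $a_{k+j}=1$ for all $3\le j\le\ell$, then $$\#\{1\le j\le q_{k+\ell}: j\theta\in(i\theta-\|q_{k+1}\theta\|-\|q_{k+2}\theta\|,\ i\theta+\tilde r_{k+1}\|q_k\theta\|+\|q_{k+1}\theta\|)\}\ge u_{\ell+1}(\tilde r_{k+1}+1).$$
   Context: $\mathbb T=\mathbb R/\mathbb Z$, points identified with fractional parts; $(x-a,x+b)$ denotes the projection to $\mathbb T$ of the real interval. $\|t\|$ is the distance to the nearest integer. $\theta=[0;a_1,a_2,\dots]$ with convergent denominators $q_0=1$, $q_{k+1}=a_{k+1}q_k+q_{k-1}$. $(u_j)$ is the Fibonacci sequence $u_0=0,u_1=1,u_{j+1}=u_j+u_{j-1}$. For $k\ge0$: $r_{k+1}=\lfloor\sqrt{4a_{k+1}+5}\rfloor-3$ if $a_{k+1}\ne2$ and $r_{k+1}=1$ if $a_{k+1}=2$; $\tilde r_{k+1}=2$ if $a_{k+1}=4$ and $a_{k+2}\ge2$, and $\tilde r_{k+1}=r_{k+1}$ otherwise. *)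

From Stdlib Require Import Reals Lra Lia ZArith Arith Classical ClassicalEpsilon.
Open Scope R_scope.

Definition fracR (t : R) : R := t - IZR (Int_part t).
Definition dnorm (t : R) : R := Rmin (fracR t) (1 - fracR t).

Fixpoint gx (theta : R) (n : nat) : R :=
  match n with
  | O => theta
  | S m => fracR (/ gx theta m)
  end.

(* partial quotients: theta = [0; a_1, a_2, ...], a_{n+1} = floor(1/x_n) *)
Definition cf_a (theta : R) (n : nat) : nat :=
  match n with
  | O => 0%nat
  | S m => Z.to_nat (Int_part (/ gx theta m))
  end.

(* convergent denominators: q_0 = 1, q_1 = a_1, q_{k+1} = a_{k+1} q_k + q_{k-1} *)
Fixpoint cf_qpair (theta : R) (n : nat) : nat * nat :=
  match n with
  | O => (1%nat, cf_a theta 1)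
  | S m => let (x, y) := cf_qpair theta m in
           (y, (cf_a theta (S (S m)) * y + x)%nat)
  end.
Definition cf_q (theta : R) (n : nat) : nat := fst (cf_qpair theta n).

(* Fibonacci: u_0 = 0, u_1 = 1 *)
Fixpoint fibpair (n : nat) : nat * nat :=
  match n with
  | O => (0%nat, 1%nat)
  | S m => let (x, y) := fibpair m in (y, (x + y)%nat)
  end.
Definition fibu (n : nat) : nat := fst (fibpair n).

Definition r_ (theta : R) (n : nat) : nat :=
  if Nat.eqb (cf_a theta n) 2 then 1%nat
  else (Nat.sqrt (4 * cf_a theta n + 5) - 3)%nat.

Definition rt_ (theta : R) (n : nat) : nat :=
  if andb (Nat.eqb (cf_a theta n) 4) (Nat.leb 2 (cf_a theta (S n))) then 2%nat
  else r_ theta n.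

(* y in T lies in the projection to T of the real interval (lo, hi) *)
Definition in_arc (lo hi y : R) : Prop := exists m : Z, lo < y + IZR m < hi.

Fixpoint count_upto (N : nat) (P : nat -> Prop) : nat :=
  match N with
  | O => 0%nat
  | S M => ((if excluded_middle_informative (P (S M)) then 1 else 0)
            + count_upto M P)%nat
  end.

Definition irrational (x : R) : Prop :=
  forall (p : Z) (q : Z), q <> 0%Z -> x <> IZR p / IZR q.

Example q_test : cf_qpair 0 3 = (cf_q 0 3, cf_q 0 4). Proof. reflexivity. Qed.
Example fib_test : fibu 7 = 13%nat. Proof. reflexivity. Qed.

From Stdlib Require Import Reals ZArith Lra Lia List ClassicalEpsilon.
Open Scope R_scope.

(* Write [D_n = ||q_n theta||], so that [q_n theta = (-1)^n D_n] mod 1 and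
   [D_(n+2) = D_n - a_(n+2) D_(n+1)].  The counted points are [i theta + d theta]
   for offsets [d] built Fibonacci-style: the offsets at level [n+2] are those at
   level [n+1] together with those at level [n] shifted by [q_(n+1)], which is
   possible because [a_(n+2) = 1] gives [q_(n+2) = q_(n+1) + q_n].  Each
   [d theta] stays (mod 1) in the target window with the margins [D_n] and
   [D_(n+1)] on the sides of [q_n theta] and [q_(n+1) theta]; a shift by
   [q_(n+1) theta] uses up exactly [D_n - D_(n+2) = D_(n+1)] of a margin.
   The seeds are [{0}] and [{0, q_k, ..., r q_k}] in (a), and the multiples
   together with their shift by [q_(k+1)] in (b); [r + 1 <= a_(k+1)] keeps the
   multiples of [q_k] below [q_(k+1)]. *)

(* [cf_delta th n = th * x_1 * ... * x_n], which equals [|q_n th - p_n|]. *)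
Fixpoint cf_delta (th : R) (n : nat) : R :=
  match n with
  | O => gx th 0
  | S m => cf_delta th m * gx th (S m)
  end.

Definition signed (n : nat) (x : R) : R := if Nat.even n then x else - x.

Lemma even_S_negb n : Nat.even (S n) = negb (Nat.even n).
Proof. now rewrite Nat.even_succ, <- Nat.negb_even. Qed.

Lemma fracR_bounds t : 0 <= fracR t < 1.
Proof. unfold fracR; destruct (base_Int_part t); lra. Qed.

Lemma cf_q_SS th n :
  cf_q th (S (S n)) = (cf_a th (S (S n)) * cf_q th (S n) + cf_q th n)%nat.
Proof.
  unfold cf_q; cbn [cf_qpair].
  destruct (cf_qpair th n) as [x y]; reflexivity.
Qed.

Section ContinuedFraction.
Variable th : R.
Hypothesis th_01 : 0 < th < 1.

Lemma gx_bounds n : 0 <= gx th n < 1.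
Proof. destruct n; simpl; [lra | apply fracR_bounds]. Qed.

Lemma cf_a_eq n : 0 < gx th n ->
  INR (cf_a th (S n)) = / gx th n - gx th (S n).
Proof.
  intros Hx. pose proof (gx_bounds n).
  assert (1 < / gx th n).
  { apply (Rmult_lt_reg_l (gx th n)); [lra|]. rewrite Rinv_r; lra. }
  cbn [cf_a gx]. unfold fracR.
  destruct (base_Int_part (/ gx th n)).
  assert (0 < Int_part (/ gx th n)%R)%Z by (apply lt_IZR; lra).
  rewrite INR_IZR_INZ, Z2Nat.id by lia. ring.
Qed.

Lemma cf_a_pos n : 0 < gx th n -> (1 <= cf_a th (S n))%nat.
Proof.
  intros Hx. apply INR_lt. rewrite cf_a_eq by exact Hx.
  pose proof (gx_bounds n); pose proof (gx_bounds (S n)).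
  assert (1 < / gx th n).
  { apply (Rmult_lt_reg_l (gx th n)); [lra|]. rewrite Rinv_r; lra. }
  change (INR 0) with 0; lra.
Qed.

Lemma cf_q_pos n : (1 <= cf_q th n)%nat.
Proof.
  enough (H : forall m, (1 <= cf_q th m)%nat /\ (1 <= cf_q th (S m))%nat) by apply H.
  clear n; intros n; induction n as [|n IH].
  - split; [reflexivity|]. apply cf_a_pos; simpl; lra.
  - split; [apply IH|]. rewrite cf_q_SS. lia.
Qed.

Lemma cf_delta_SS n : 0 < gx th (S n) ->
  cf_delta th (S (S n)) = cf_delta th n - INR (cf_a th (S (S n))) * cf_delta th (S n).
Proof.
  intros Hx. rewrite cf_a_eq by exact Hx. cbn [cf_delta]. field. lra.
Qed.

Lemma cf_q_theta n : (forall m, (m < n)%nat -> 0 < gx th m) ->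
  exists P : Z, INR (cf_q th n) * th = IZR P + signed n (cf_delta th n).
Proof.
  enough (H : forall n, (forall m, (m < S n)%nat -> 0 < gx th m) ->
    (exists P : Z, INR (cf_q th n) * th = IZR P + signed n (cf_delta th n)) /\
    (exists P : Z, INR (cf_q th (S n)) * th = IZR P + signed (S n) (cf_delta th (S n)))).
  { intros Hpos. destruct n as [|n]; [exists 0%Z; unfold signed; simpl; ring|].
    apply (H n Hpos). }
  clear n; intros n; induction n as [|n IH]; intros Hpos.
  - split; [exists 0%Z; unfold signed; simpl; ring|]. exists 1%Z.
    change (cf_q th 1) with (cf_a th 1). rewrite cf_a_eq by (simpl; lra).
    unfold signed; simpl. field. lra.
  - destruct (IH (fun m Hm => Hpos m ltac:(lia))) as [[P0 E0] [P1 E1]].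
    split; [exists P1; exact E1|].
    exists (Z.of_nat (cf_a th (S (S n))) * P1 + P0)%Z.
    rewrite cf_q_SS, cf_delta_SS by (apply Hpos; lia).
    rewrite plus_INR, mult_INR, plus_IZR, mult_IZR, <- INR_IZR_INZ,
      Rmult_plus_distr_r, Rmult_assoc, E0, E1.
    unfold signed. rewrite Nat.even_succ_succ, even_S_negb.
    destruct (Nat.even n); simpl; ring.
Qed.

Hypothesis th_irr : irrational th.

Lemma gx_pos n : 0 < gx th n.
Proof.
  induction n as [[|n] IH] using lt_wf_ind; [simpl; lra|].
  destruct (gx_bounds (S n)) as [[Hlt|Heq] _]; [exact Hlt|].
  exfalso. destruct (cf_q_theta (S n) IH) as [P E].
  assert (Hq : 0 < INR (cf_q th (S n))) by (apply lt_0_INR, cf_q_pos).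
  apply (th_irr P (Z.of_nat (cf_q th (S n)))); [pose proof (cf_q_pos (S n)); lia|].
  rewrite <- INR_IZR_INZ.
  replace (IZR P) with (INR (cf_q th (S n)) * th)
    by (rewrite E; unfold signed; cbn [cf_delta]; rewrite <- Heq;
        destruct (Nat.even _); ring).
  field. lra.
Qed.

Lemma cf_q_theta_signed n :
  exists P : Z, INR (cf_q th n) * th = IZR P + signed n (cf_delta th n).
Proof. apply cf_q_theta; intros; apply gx_pos. Qed.

Lemma cf_delta_pos n : 0 < cf_delta th n.
Proof.
  induction n; cbn [cf_delta]; [apply gx_pos|].
  pose proof (gx_pos (S n)). nra.
Qed.

Lemma cf_delta_decr n : cf_delta th (S n) < cf_delta th n.
Proof.
  cbn [cf_delta]. pose proof (cf_delta_pos n). pose proof (gx_bounds (S n)). nra.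
Qed.

Lemma cf_delta_lt1 n : cf_delta th n < 1.
Proof. induction n; [simpl; lra|]. pose proof (cf_delta_decr n). lra. Qed.

Lemma cf_delta_lt_half n : cf_delta th (S (S n)) < / 2.
Proof.
  pose proof (le_INR _ _ (cf_a_pos (S n) (gx_pos (S n)))).
  pose proof (cf_delta_SS n (gx_pos (S n))). pose proof (cf_delta_pos (S n)).
  pose proof (cf_delta_decr (S n)). pose proof (cf_delta_lt1 n).
  simpl in *. nra.
Qed.

Lemma dnorm_signed (P : Z) n d : 0 < d < / 2 -> dnorm (IZR P + signed n d) = d.
Proof.
  intros Hd. unfold dnorm, fracR, signed. destruct (Nat.even n).
  - rewrite <- (Int_part_spec (IZR P + d) P) by lra.
    rewrite Rmin_left; lra.
  - rewrite <- (Int_part_spec (IZR P + - d) (P - 1)) by (rewrite minus_IZR; lra).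
    rewrite minus_IZR, Rmin_right; lra.
Qed.

Lemma dnorm_cf_q n : (2 <= n)%nat -> dnorm (INR (cf_q th n) * th) = cf_delta th n.
Proof.
  intros Hn. destruct (cf_q_theta_signed n) as [P ->]. apply dnorm_signed.
  split; [apply cf_delta_pos|]. destruct n as [|[|n]]; [lia|lia|].
  apply cf_delta_lt_half.
Qed.

End ContinuedFraction.

Lemma count_upto_filter N (P : nat -> Prop) :
  count_upto N P =
  length (filter (fun j => if excluded_middle_informative (P j) then true else false)
                 (seq 1 N)).
Proof.
  induction N as [|N IH]; [reflexivity|].
  rewrite seq_S, filter_app, length_app, <- IH. cbn [count_upto filter].
  replace (1 + N)%nat with (S N) by lia.
  destruct (excluded_middle_informative (P (S N))); simpl; lia.
Qed.

Lemma count_upto_ge_length N (P : nat -> Prop) (J : list nat) : NoDup J ->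
  (forall j, In j J -> (1 <= j <= N)%nat /\ P j) -> (length J <= count_upto N P)%nat.
Proof.
  intros HJ HP. rewrite count_upto_filter. apply NoDup_incl_length; [exact HJ|].
  intros j Hj. destruct (HP j Hj) as [Hr Pj]. apply filter_In. split.
  - apply in_seq. lia.
  - destruct (excluded_middle_informative (P j)); [reflexivity | contradiction].
Qed.

Lemma NoDup_app_shift (q : nat) (B B' : list nat) : NoDup B' -> NoDup B ->
  (forall d, In d B' -> (d < q)%nat) -> NoDup (B' ++ map (Nat.add q) B).
Proof.
  intros HB' HB Hlt. apply NoDup_app; [exact HB'| |].
  - apply NoDup_map_NoDup_ForallPairs; [intros x y _ _ E; lia | exact HB].
  - intros x Hx Hy. apply in_map_iff in Hy. destruct Hy as [d [<- _]].
    specialize (Hlt _ Hx). lia.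
Qed.

Lemma fibu_SS n : fibu (S (S n)) = (fibu (S n) + fibu n)%nat.
Proof. unfold fibu; simpl. destruct (fibpair n); simpl; lia. Qed.

Fixpoint fib_lists (sh : nat -> nat) (B0 B1 : list nat) (l : nat) : list nat :=
  match l with
  | O => B0
  | S O => B1
  | S ((S l'') as l') =>
      fib_lists sh B0 B1 l' ++ map (Nat.add (sh l'')) (fib_lists sh B0 B1 l'')
  end.

Lemma fib_lists_length sh B0 B1 x y m :
  length B0 = (x * fibu m + y * fibu (S m))%nat ->
  length B1 = (x * fibu (S m) + y * fibu (S (S m)))%nat ->
  forall l, length (fib_lists sh B0 B1 l) = (x * fibu (l + m) + y * fibu (S (l + m)))%nat.
Proof.
  intros H0 H1.
  enough (H : forall l,
    length (fib_lists sh B0 B1 l) = (x * fibu (l + m) + y * fibu (S (l + m)))%nat /\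
    length (fib_lists sh B0 B1 (S l)) = (x * fibu (S l + m) + y * fibu (S (S l + m)))%nat)
    by apply H.
  intros l; induction l as [|l [IH0 IH1]]; [split; assumption|].
  split; [exact IH1|].
  change (fib_lists sh B0 B1 (S (S l)))
    with (fib_lists sh B0 B1 (S l) ++ map (Nat.add (sh l)) (fib_lists sh B0 B1 l)).
  rewrite length_app, length_map, IH0, IH1. cbn [Nat.add].
  rewrite !fibu_SS. lia.
Qed.

Definition eqmod1 (x e : R) : Prop := exists z : Z, x = e + IZR z.

Section Windows.
Variable th : R.
Hypothesis th_01 : 0 < th < 1.
Hypothesis th_irr : irrational th.

Definition lmargin (n : nat) : R := if Nat.even n then cf_delta th n else cf_delta th (S n).
Definition rmargin (n : nat) : R := if Nat.even n then cf_delta th (S n) else cf_delta th n.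

Definition fits (n c : nat) (Lo Hi : R) (d : nat) : Prop :=
  (d + c <= cf_q th n)%nat /\
  exists e, eqmod1 (INR d * th) e /\ Lo + lmargin n <= e <= Hi - rmargin n.

Definition fits_all (n c : nat) (Lo Hi : R) (B : list nat) : Prop :=
  NoDup B /\ forall d, In d B -> fits n c Lo Hi d.

Lemma margins_pos n : 0 < lmargin n /\ 0 < rmargin n.
Proof.
  unfold lmargin, rmargin.
  destruct (Nat.even n); split; apply cf_delta_pos; assumption.
Qed.

Lemma margins_SS_le n : lmargin (S (S n)) <= lmargin (S n) /\ rmargin (S (S n)) <= rmargin (S n).
Proof.
  unfold lmargin, rmargin. rewrite Nat.even_succ_succ, even_S_negb.
  pose proof (cf_delta_decr th th_01 th_irr (S n)).
  pose proof (cf_delta_decr th th_01 th_irr (S (S n))).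
  destruct (Nat.even n); cbn [negb]; lra.
Qed.

Lemma cf_q_le_SS n : (cf_q th (S n) <= cf_q th (S (S n)))%nat.
Proof.
  rewrite cf_q_SS. pose proof (cf_a_pos th th_01 (S n) (gx_pos th th_01 th_irr (S n))). nia.
Qed.

Lemma fits_SS n c Lo Hi d : fits (S n) c Lo Hi d -> fits (S (S n)) c Lo Hi d.
Proof.
  intros [Hq [e [He Hw]]]. pose proof (cf_q_le_SS n). pose proof (margins_SS_le n).
  split; [lia|]. exists e. split; [exact He | lra].
Qed.

(* With [a_(n+2) = 1], shifting by [q_(n+1)] moves the point by [D_(n+1)] away
   from the side of [q_n th], and [D_n - D_(n+1) = D_(n+2)] is exactly the new
   margin on that side. *)
Lemma fits_shift n c Lo Hi d : cf_a th (S (S n)) = 1%nat ->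
  fits n c Lo Hi d -> fits (S (S n)) c Lo Hi (cf_q th (S n) + d).
Proof.
  intros Ha [Hq [e [[z He] Hw]]]. split; [rewrite cf_q_SS, Ha; lia|].
  destruct (cf_q_theta_signed th th_01 th_irr (S n)) as [P HP].
  exists (e + signed (S n) (cf_delta th (S n))). split.
  { exists (z + P)%Z. rewrite plus_INR, Rmult_plus_distr_r, He, HP, plus_IZR. ring. }
  pose proof (cf_delta_SS th th_01 n (gx_pos th th_01 th_irr (S n))) as HD.
  rewrite Ha in HD. simpl INR in HD.
  pose proof (cf_delta_decr th th_01 th_irr (S n)).
  pose proof (cf_delta_decr th th_01 th_irr (S (S n))).
  pose proof (cf_delta_pos th th_01 th_irr (S n)).
  revert Hw. unfold lmargin, rmargin, signed.
  rewrite Nat.even_succ_succ, even_S_negb. destruct (Nat.even n); cbn [negb]; lra.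
Qed.

Lemma fits_all_step n c Lo Hi B B' : (1 <= c)%nat -> cf_a th (S (S n)) = 1%nat ->
  fits_all n c Lo Hi B -> fits_all (S n) c Lo Hi B' ->
  fits_all (S (S n)) c Lo Hi (B' ++ map (Nat.add (cf_q th (S n))) B).
Proof.
  intros Hc Ha [ND F] [ND' F']. split.
  - apply NoDup_app_shift; [exact ND' | exact ND|].
    intros d Hd. destruct (F' d Hd). lia.
  - intros d Hd. apply in_app_or in Hd. destruct Hd as [Hd|Hd].
    + apply fits_SS, F', Hd.
    + apply in_map_iff in Hd. destruct Hd as [d0 [<- Hd]].
      apply fits_shift, F, Hd. exact Ha.
Qed.

Lemma fits_all_fib_lists s c Lo Hi B0 B1 L : (1 <= c)%nat ->
  (forall j, (2 <= j <= L)%nat -> cf_a th (s + j) = 1%nat) ->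
  fits_all s c Lo Hi B0 -> fits_all (S s) c Lo Hi B1 ->
  forall l, (l <= L)%nat ->
  fits_all (s + l) c Lo Hi (fib_lists (fun j => cf_q th (S (s + j))) B0 B1 l).
Proof.
  intros Hc Ha H0 H1.
  enough (H : forall l, (S l <= L)%nat ->
    fits_all (s + l) c Lo Hi (fib_lists (fun j => cf_q th (S (s + j))) B0 B1 l) /\
    fits_all (s + S l) c Lo Hi (fib_lists (fun j => cf_q th (S (s + j))) B0 B1 (S l))).
  { intros [|l] Hl; [rewrite Nat.add_0_r; exact H0 | apply H; exact Hl]. }
  intros l; induction l as [|l IH]; intros Hl.
  - rewrite Nat.add_0_r, Nat.add_1_r. split; assumption.
  - destruct (IH ltac:(lia)) as [IH0 IH1]. split; [exact IH1|].
    rewrite !Nat.add_succ_r in *. apply fits_all_step; try assumption.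
    rewrite <- !Nat.add_succ_r. apply Ha. lia.
Qed.

Lemma count_in_arc_ge n c Lo Hi B (i : nat) lo hi :
  fits_all n c Lo Hi B -> (1 <= i <= c)%nat -> lo = INR i * th + Lo -> hi = INR i * th + Hi ->
  (length B <= count_upto (cf_q th n) (fun j => in_arc lo hi (INR j * th)))%nat.
Proof.
  intros [ND F] Hic -> ->. rewrite <- (length_map (Nat.add i)). apply count_upto_ge_length.
  - apply NoDup_map_NoDup_ForallPairs; [intros x y _ _ E; lia | exact ND].
  - intros j Hj. apply in_map_iff in Hj. destruct Hj as [d [<- Hd]].
    destruct (F d Hd) as [Hq [e [[z He] Hw]]]. split; [lia|].
    exists (- z)%Z. rewrite plus_INR, Rmult_plus_distr_r, He, opp_IZR.
    pose proof (margins_pos n). lra.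
Qed.

End Windows.

Lemma r_succ_le th n : (1 <= cf_a th n)%nat -> (r_ th n + 1 <= cf_a th n)%nat.
Proof.
  intros Ha. unfold r_. destruct (Nat.eqb_spec (cf_a th n) 2); [lia|].
  enough (Nat.sqrt (4 * cf_a th n + 5) <= cf_a th n + 2)%nat by lia.
  rewrite <- (Nat.sqrt_square (cf_a th n + 2)). apply Nat.sqrt_le_mono. nia.
Qed.

Lemma rt_succ_le th n : (1 <= cf_a th n)%nat -> (rt_ th n + 1 <= cf_a th n)%nat.
Proof.
  intros Ha. pose proof (r_succ_le th n Ha). unfold rt_.
  destruct (Nat.eqb_spec (cf_a th n) 4); destruct (Nat.leb 2 _); simpl; lia.
Qed.

Definition multiples (c r : nat) : list nat := map (fun m => (m * c)%nat) (seq 0 (S r)).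

Lemma multiples_length c r : length (multiples c r) = S r.
Proof. unfold multiples. now rewrite length_map, length_seq. Qed.

Lemma NoDup_multiples c r : (1 <= c)%nat -> NoDup (multiples c r).
Proof.
  intros Hc. apply NoDup_map_NoDup_ForallPairs; [intros x y _ _ E; nia | apply seq_NoDup].
Qed.

Lemma in_multiples c r d : In d (multiples c r) -> exists m, d = (m * c)%nat /\ (m <= r)%nat.
Proof.
  unfold multiples. intros [m [<- Hm]]%in_map_iff. apply in_seq in Hm.
  exists m. split; [reflexivity | lia].
Qed.

Lemma cf_q_S_ge th n : (cf_a th (S n) * cf_q th n <= cf_q th (S n))%nat.
Proof.
  destruct n as [|m]; [change (cf_a th 1 * 1 <= cf_a th 1)%nat; lia | rewrite cf_q_SS; lia].
Qed.

Section Seeds.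
Variable th : R.
Hypothesis th_01 : 0 < th < 1.
Hypothesis th_irr : irrational th.
Variable n : nat.
Hypothesis n_even : Nat.even n = true.
Variables Lo Hi : R.

Notation D := (cf_delta th).

Lemma multiple_eqmod1 m : eqmod1 (INR (m * cf_q th n) * th) (INR m * D n).
Proof.
  destruct (cf_q_theta_signed th th_01 th_irr n) as [P HP].
  unfold signed in HP; rewrite n_even in HP.
  exists (Z.of_nat m * P)%Z.
  rewrite mult_INR, mult_IZR, <- INR_IZR_INZ, Rmult_assoc, HP. ring.
Qed.

Lemma fits_all_zero : Lo + D n <= 0 <= Hi - D (S n) ->
  fits_all th n (cf_q th n) Lo Hi (0%nat :: nil).
Proof.
  intros Hw. split; [constructor; [intros [] | constructor]|].
  intros d [<-|[]]. split; [lia|]. exists 0. split; [exists 0%Z; simpl; ring|].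
  unfold lmargin, rmargin; rewrite n_even. lra.
Qed.

Variable r : nat.
Hypothesis r_lt_a : (r + 1 <= cf_a th (S n))%nat.

Lemma fits_multiple m : (m <= r)%nat -> Lo + D (S (S n)) <= 0 -> INR r * D n <= Hi - D (S n) ->
  fits th (S n) (cf_q th n) Lo Hi (m * cf_q th n).
Proof.
  intros Hm Hlo Hhi. split; [pose proof (cf_q_S_ge th n); nia|].
  exists (INR m * D n). split; [apply multiple_eqmod1|].
  unfold lmargin, rmargin; rewrite even_S_negb, n_even; cbn [negb].
  apply le_INR in Hm. pose proof (pos_INR m). pose proof (cf_delta_pos th th_01 th_irr n).
  nra.
Qed.

Lemma fits_all_multiples : Lo + D (S (S n)) <= 0 -> INR r * D n <= Hi - D (S n) ->
  fits_all th (S n) (cf_q th n) Lo Hi (multiples (cf_q th n) r).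
Proof.
  intros Hlo Hhi. split; [apply NoDup_multiples, cf_q_pos; exact th_01|].
  intros d Hd. destruct (in_multiples _ _ _ Hd) as [m [-> Hm]].
  apply fits_multiple; assumption.
Qed.

Lemma fits_all_multiples_twice : cf_a th (S (S n)) = 2%nat ->
  Lo + D (S n) + D (S (S n)) <= 0 -> INR r * D n + D (S n) <= Hi ->
  fits_all th (S (S n)) (cf_q th n) Lo Hi
    (multiples (cf_q th n) r ++ map (Nat.add (cf_q th (S n))) (multiples (cf_q th n) r)).
Proof.
  intros Ha Hlo Hhi.
  pose proof (cf_delta_pos th th_01 th_irr (S n)).
  pose proof (cf_delta_pos th th_01 th_irr (S (S n))).
  pose proof (cf_delta_decr th th_01 th_irr (S (S n))).
  pose proof (cf_delta_decr th th_01 th_irr (S n)).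
  destruct (fits_all_multiples ltac:(lra) ltac:(lra)) as [ND F].
  split.
  - apply NoDup_app_shift; [exact ND | exact ND|].
    intros d Hd. destruct (F d Hd). pose proof (cf_q_pos th th_01 n). lia.
  - intros d [Hd|Hd]%in_app_or; [apply fits_SS, F; assumption|].
    apply in_map_iff in Hd. destruct Hd as [d0 [<- Hd]].
    destruct (in_multiples _ _ _ Hd) as [m [-> Hm]].
    destruct (F _ Hd) as [Hq _].
    split; [rewrite cf_q_SS, Ha; lia|].
    destruct (cf_q_theta_signed th th_01 th_irr (S n)) as [P HP].
    destruct (multiple_eqmod1 m) as [z Hz].
    exists (INR m * D n - D (S n)). split.
    { exists (P + z)%Z. rewrite plus_INR, Rmult_plus_distr_r, HP, Hz, plus_IZR.
      unfold signed; rewrite even_S_negb, n_even. cbn [negb]. ring. }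
    unfold lmargin, rmargin; rewrite Nat.even_succ_succ, n_even.
    apply le_INR in Hm. pose proof (pos_INR m). pose proof (cf_delta_pos th th_01 th_irr n).
    nra.
Qed.

End Seeds.

Lemma even_ge2 k : Nat.Even k -> (1 <= k)%nat -> (2 <= k)%nat.
Proof. intros [m ->] Hk. lia. Qed.

Lemma lemma4p3_a (theta : R) (k l i : nat) :
  0 < theta < 1 -> irrational theta -> Nat.Even k -> (1 <= k)%nat ->
  (1 <= i <= cf_q theta k)%nat ->
  (forall j : nat, (2 <= j <= l)%nat -> cf_a theta (k + j) = 1%nat) ->
  (fibu l * rt_ theta (k + 1) + fibu (l + 1) <=
   count_upto (cf_q theta (k + l))
     (fun j => in_arc
        (INR i * theta - dnorm (INR (cf_q theta k) * theta))
        (INR i * theta + INR (rt_ theta (k + 1)) * dnorm (INR (cf_q theta k) * theta)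
           + dnorm (INR (cf_q theta (k + 1)) * theta))
        (INR j * theta)))%nat.
Proof.
  intros Hth Hirr Hev Hk Hi Ha.
  pose proof (even_ge2 k Hev Hk) as Hk2. apply Nat.even_spec in Hev.
  replace (k + 1)%nat with (S k) by lia. rewrite !dnorm_cf_q by (auto; lia).
  set (r := rt_ theta (S k)). set (D := cf_delta theta).
  pose proof (rt_succ_le theta (S k) (cf_a_pos theta Hth k (gx_pos theta Hth Hirr k))) as Hr.
  pose proof (cf_delta_pos theta Hth Hirr k). pose proof (cf_delta_decr theta Hth Hirr (S k)).
  pose proof (cf_delta_decr theta Hth Hirr k). pose proof (pos_INR r).
  assert (Hfits : fits_all theta (k + l) (cf_q theta k) (- D k) (INR r * D k + D (S k))
    (fib_lists (fun j => cf_q theta (S (k + j))) (0%nat :: nil) (multiples (cf_q theta k) r) l)).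
  { apply fits_all_fib_lists with (L := l); auto.
    - apply cf_q_pos; exact Hth.
    - apply fits_all_zero; auto. unfold D. nra.
    - apply fits_all_multiples; auto; unfold D; nra. }
  eapply Nat.le_trans; [| apply (count_in_arc_ge theta Hth Hirr _ _ _ _ _ i _ _ Hfits Hi); ring].
  rewrite (fib_lists_length _ _ _ r 1 0);
    [| unfold fibu; simpl; lia | rewrite multiples_length; unfold fibu; simpl; lia].
  rewrite Nat.add_0_r, Nat.add_1_r. lia.
Qed.

Lemma lemma4p3_b (theta : R) (k l i : nat) :
  0 < theta < 1 -> irrational theta -> Nat.Even k -> (1 <= k)%nat -> (1 <= l)%nat ->
  (1 <= i <= cf_q theta k)%nat ->
  cf_a theta (k + 2) = 2%nat ->
  (forall j : nat, (3 <= j <= l)%nat -> cf_a theta (k + j) = 1%nat) ->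
  (fibu (l + 1) * (rt_ theta (k + 1) + 1) <=
   count_upto (cf_q theta (k + l))
     (fun j => in_arc
        (INR i * theta - dnorm (INR (cf_q theta (k + 1)) * theta)
           - dnorm (INR (cf_q theta (k + 2)) * theta))
        (INR i * theta + INR (rt_ theta (k + 1)) * dnorm (INR (cf_q theta k) * theta)
           + dnorm (INR (cf_q theta (k + 1)) * theta))
        (INR j * theta)))%nat.
Proof.
  intros Hth Hirr Hev Hk Hl Hi Ha2 Ha.
  pose proof (even_ge2 k Hev Hk) as Hk2. apply Nat.even_spec in Hev.
  replace (k + 2)%nat with (S (S k)) in * by lia.
  replace (k + 1)%nat with (S k) by lia. rewrite !dnorm_cf_q by (auto; lia).
  set (r := rt_ theta (S k)). set (D := cf_delta theta).
  pose proof (rt_succ_le theta (S k) (cf_a_pos theta Hth k (gx_pos theta Hth Hirr k))) as Hr.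
  pose proof (cf_delta_pos theta Hth Hirr k). pose proof (cf_delta_decr theta Hth Hirr (S k)).
  pose proof (cf_delta_decr theta Hth Hirr k). pose proof (pos_INR r).
  pose proof (cf_delta_pos theta Hth Hirr (S (S k))).
  assert (Hfits : fits_all theta (S k + (l - 1)) (cf_q theta k)
    (- D (S k) - D (S (S k))) (INR r * D k + D (S k))
    (fib_lists (fun j => cf_q theta (S (S k + j))) (multiples (cf_q theta k) r)
       (multiples (cf_q theta k) r ++ map (Nat.add (cf_q theta (S k))) (multiples (cf_q theta k) r))
       (l - 1))).
  { apply fits_all_fib_lists with (L := (l - 1)%nat); auto.
    - apply cf_q_pos; exact Hth.
    - intros j Hj. replace (S k + j)%nat with (k + S j)%nat by lia. apply Ha. lia.
    - apply fits_all_multiples; auto; unfold D; nra.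
    - apply fits_all_multiples_twice; auto; unfold D; nra. }
  replace (k + l)%nat with (S k + (l - 1))%nat by lia.
  eapply Nat.le_trans; [| apply (count_in_arc_ge theta Hth Hirr _ _ _ _ _ i _ _ Hfits Hi); ring].
  rewrite (fib_lists_length _ _ _ (S r) 0 2);
    [| rewrite multiples_length; unfold fibu; simpl; lia
     | rewrite length_app, length_map, multiples_length; unfold fibu; simpl; lia].
  replace (l - 1 + 2)%nat with (l + 1)%nat by lia. lia.
Qed.

Theorem lemma4p3 (theta : R) (k l i : nat) :
  0 < theta < 1 -> irrational theta ->
  Nat.Even k -> (1 <= k)%nat -> (1 <= l)%nat ->
  (1 <= i <= cf_q theta k)%nat ->
  ((forall j : nat, (2 <= j <= l)%nat -> cf_a theta (k + j) = 1%nat) ->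
   (fibu l * rt_ theta (k + 1) + fibu (l + 1) <=
    count_upto (cf_q theta (k + l))
      (fun j => in_arc
         (INR i * theta - dnorm (INR (cf_q theta k) * theta))
         (INR i * theta + INR (rt_ theta (k + 1)) * dnorm (INR (cf_q theta k) * theta)
            + dnorm (INR (cf_q theta (k + 1)) * theta))
         (INR j * theta)))%nat)
  /\
  (cf_a theta (k + 2) = 2%nat ->
   (forall j : nat, (3 <= j <= l)%nat -> cf_a theta (k + j) = 1%nat) ->
   (fibu (l + 1) * (rt_ theta (k + 1) + 1) <=
    count_upto (cf_q theta (k + l))
      (fun j => in_arc
         (INR i * theta - dnorm (INR (cf_q theta (k + 1)) * theta)
            - dnorm (INR (cf_q theta (k + 2)) * theta))
         (INR i * theta + INR (rt_ theta (k + 1)) * dnorm (INR (cf_q theta k) * theta)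
            + dnorm (INR (cf_q theta (k + 1)) * theta))
         (INR j * theta)))%nat).
Proof.
  intros Hth Hirr Hev Hk Hl Hi. split.
  - apply lemma4p3_a; assumption.
  - apply lemma4p3_b; assumption.
Qed.
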